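(* Let $(\mathbb{R}^{n},g)$, $n\ge 3$, be Euclidean space with coordinates $x=(x_1,\dots,x_n)$ and $g_{ij}=\delta_{ij}$. Consider smooth functions $\varphi(\xi)$ and $u(\xi)$, where $\xi=\sum_{i=1}^{n}\alpha_i x_i$, $\alpha_i\in\mathbb{R}$, and $\sum_{i=1}^n\alpha_i^2=1$. Then $\overline g=\frac{1}{\varphi^2}g$ is a nontrivial $m$-quasi-Einstein metric with potential function $f=-m\log u$ and $\lambda\le 0$ if, and only if, $\varphi$ and $u$ satisfy $$(n-2)\frac{\varphi''}{\varphi}-\frac{m}{u}\Big(u''+2\frac{\varphi'}{\varphi}u'\Big)=0,$$ $$\frac{\varphi''}{\varphi}-(n-1)\frac{(\varphi')^2}{\varphi^2}+m\frac{\varphi'}{\varphi}\frac{u'}{u}=\frac{\lambda}{\varphi^2}.$$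
   Context: A Riemannian metric $\overline g$ (not necessarily complete) is called an $m$-quasi-Einstein metric with potential function $f$ if $\mathrm{Ric}_{\overline g}+\nabla^2 f-\frac{1}{m}\,df\otimes df=\lambda\,\overline g$ for some constants $\lambda$ and $m\neq 0$, where $\nabla^2 f$ is the Hessian of $f$ with respect to $\overline g$. It is called nontrivial if $f$ is not constant. Primes denote derivatives with respect to $\xi$. *)

From Stdlib Require Import Reals.
From Coquelicot Require Import Coquelicot.
Open Scope R_scope.

Fixpoint sumR (n : nat) (f : nat -> R) : R :=
  match n with
  | O => 0
  | S k => sumR k f + f k
  end.

(* Points of R^n are represented as x : nat -> R; only x 0, ..., x (n-1) matter. *)
Definition upd (x : nat -> R) (i : nat) (t : R) : nat -> R :=
  fun j => if Nat.eqb j i then t else x j.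

Definition pd (i : nat) (F : (nat -> R) -> R) (x : nat -> R) : R :=
  Derive (fun t => F (upd x i t)) (x i).

(* Coordinates-based Riemannian geometry: g i j x is the metric,
   gi i j x its inverse matrix. *)
Definition Metric := nat -> nat -> (nat -> R) -> R.

Definition christoffel (n : nat) (g gi : Metric) (k i j : nat) (x : nat -> R) : R :=
  / 2 * sumR n (fun l => gi k l x *
     (pd i (g j l) x + pd j (g i l) x - pd l (g i j) x)).

Definition ricci (n : nat) (g gi : Metric) (i j : nat) (x : nat -> R) : R :=
  let G := christoffel n g gi in
  sumR n (fun k =>
      pd k (G k i j) x - pd j (G k i k) x
    + sumR n (fun l => G k k l x * G l i j x - G k j l x * G l i k x)).

Definition hessian (n : nat) (g gi : Metric) (F : (nat -> R) -> R)
    (i j : nat) (x : nat -> R) : R :=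
  pd i (pd j F) x - sumR n (fun k => christoffel n g gi k i j x * pd k F x).

Definition quasi_einstein (n : nat) (g gi : Metric) (f : (nat -> R) -> R)
    (m lambda : R) : Prop :=
  forall (x : nat -> R) (i j : nat), (i < n)%nat -> (j < n)%nat ->
    ricci n g gi i j x + hessian n g gi f i j x - / m * pd i f x * pd j f x
    = lambda * g i j x.

Definition conf_metric (Phi : (nat -> R) -> R) : Metric :=
  fun i j x => if Nat.eqb i j then / (Phi x ^ 2) else 0.
Definition conf_metric_inv (Phi : (nat -> R) -> R) : Metric :=
  fun i j x => if Nat.eqb i j then Phi x ^ 2 else 0.

Definition xi (n : nat) (alpha : nat -> R) (x : nat -> R) : R :=
  sumR n (fun i => alpha i * x i).

(* Every quantity depends on x only through xi = <alpha, x>, and the partial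
   derivative of h(xi) in x_i is alpha_i h'(xi).  The Christoffel symbols of
   g / phi(xi)^2 are -(phi'/phi)(alpha_i delta_jk + alpha_j delta_ik - alpha_k delta_ij);
   contracting them with |alpha| = 1 gives
     Ric_ij = (n - 2)(phi''/phi) alpha_i alpha_j + (phi''/phi - (n - 1) phi'^2/phi^2) delta_ij,
   and Hess f - df (x) df / m is likewise a combination of alpha_i alpha_j and delta_ij.
   So the quasi-Einstein tensor minus lambda gbar is A(xi) alpha_i alpha_j + B(xi) delta_ij.
   As alpha <> 0 and n >= 2 this vanishes iff A = B = 0, and every value t of xi is
   attained (at x = t alpha); A = 0 and B = 0 are the two equations.  Neither the
   nontriviality of f nor the sign of lambda plays a role. *)

From Stdlib Require Import Reals Lra Lia.
From Coquelicot Require Import Coquelicot.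
Open Scope R_scope.

Lemma sumR_ext n (F G : nat -> R) :
  (forall k, (k < n)%nat -> F k = G k) -> sumR n F = sumR n G.
Proof.
  induction n as [|n IH]; intros E; simpl; [reflexivity|].
  f_equal; [apply IH; intros k Hk|]; apply E; lia.
Qed.

Lemma sumR_plus n (F G : nat -> R) :
  sumR n (fun k => F k + G k) = sumR n F + sumR n G.
Proof. induction n as [|n IH]; simpl; [ring|rewrite IH; ring]. Qed.

Lemma sumR_minus n (F G : nat -> R) :
  sumR n (fun k => F k - G k) = sumR n F - sumR n G.
Proof. induction n as [|n IH]; simpl; [ring|rewrite IH; ring]. Qed.

Lemma sumR_scal_l n c (F : nat -> R) :
  sumR n (fun k => c * F k) = c * sumR n F.
Proof. induction n as [|n IH]; simpl; [ring|rewrite IH; ring]. Qed.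

Lemma sumR_const n c : sumR n (fun _ => c) = INR n * c.
Proof. induction n as [|n IH]; simpl sumR; [simpl; ring|rewrite IH, S_INR; ring]. Qed.

Definition kron (i j : nat) : R := if Nat.eqb i j then 1 else 0.

Lemma kron_sym i j : kron i j = kron j i.
Proof. unfold kron; rewrite Nat.eqb_sym; reflexivity. Qed.

Lemma kron_diag i : kron i i = 1.
Proof. unfold kron; rewrite Nat.eqb_refl; reflexivity. Qed.

Lemma kron_neq i j : i <> j -> kron i j = 0.
Proof. intros Hij; unfold kron; apply Nat.eqb_neq in Hij; rewrite Hij; reflexivity. Qed.

Lemma sumR_kron_gen n k (F : nat -> R) :
  sumR n (fun l => kron k l * F l) = if Nat.ltb k n then F k else 0.
Proof.
  induction n as [|n IH]; simpl sumR; [reflexivity|]. rewrite IH.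
  destruct (Nat.eq_dec k n) as [->|Hkn].
  - rewrite kron_diag, Nat.ltb_irrefl, (proj2 (Nat.ltb_lt n (S n))) by lia. ring.
  - rewrite kron_neq by exact Hkn.
    destruct (Nat.ltb_spec k n), (Nat.ltb_spec k (S n)); try lia; ring.
Qed.

Lemma sumR_kron n k (F : nat -> R) :
  (k < n)%nat -> sumR n (fun l => kron k l * F l) = F k.
Proof. intros Hk; rewrite sumR_kron_gen; apply Nat.ltb_lt in Hk; rewrite Hk; reflexivity. Qed.

Lemma upd_kron x i t j : upd x i t j = x j + kron i j * (t - x i).
Proof.
  unfold upd, kron; rewrite Nat.eqb_sym.
  destruct (Nat.eqb_spec i j) as [->|]; ring.
Qed.

Section PlaneWave.

Variables (n : nat) (alpha : nat -> R).

Lemma xi_upd x i t :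
  (i < n)%nat -> xi n alpha (upd x i t) = xi n alpha x + alpha i * (t - x i).
Proof.
  intros Hi; unfold xi.
  rewrite (sumR_ext n _ (fun j => alpha j * x j + kron i j * (alpha j * (t - x i)))).
  - rewrite sumR_plus, sumR_kron by exact Hi. reflexivity.
  - intros j _; rewrite upd_kron; ring.
Qed.

Lemma xi_scale t :
  xi n alpha (fun k => t * alpha k) = t * sumR n (fun k => alpha k ^ 2).
Proof.
  unfold xi; rewrite <- sumR_scal_l; apply sumR_ext; intros; ring.
Qed.

Lemma pd_ext i (F G : (nat -> R) -> R) x :
  (forall y, F y = G y) -> pd i F x = pd i G x.
Proof. intros E; unfold pd; apply Derive_ext; intros; apply E. Qed.

Lemma pd_plane_wave i (h : R -> R) x d :
  (i < n)%nat -> is_derive h (xi n alpha x) d ->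
  pd i (fun y => h (xi n alpha y)) x = alpha i * d.
Proof.
  intros Hi Hd; unfold pd.
  rewrite (Derive_ext _ (fun t => h (xi n alpha x + alpha i * (t - x i))))
    by (intros t; rewrite xi_upd by exact Hi; reflexivity).
  apply is_derive_unique, (is_derive_comp h (fun t => xi n alpha x + alpha i * (t - x i))).
  - replace (xi n alpha x + alpha i * (x i - x i)) with (xi n alpha x) by ring. exact Hd.
  - auto_derive; [exact I | ring].
Qed.

End PlaneWave.

Definition logd (f : R -> R) (t : R) : R := Derive f t / f t.

Lemma is_derive_inv_sq (f : R -> R) t :
  ex_derive f t -> f t <> 0 ->
  is_derive (fun s => / f s ^ 2) t (- 2 * logd f t / f t ^ 2).
Proof.
  intros Hd Hf; unfold logd; auto_derive.
  - repeat split; [exact Hd|]. rewrite Rmult_1_r.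
    apply Rmult_integral_contrapositive_currified; exact Hf.
  - change (fun x => f x) with f. field; exact Hf.
Qed.

Lemma is_derive_logd (f : R -> R) t :
  ex_derive f t -> ex_derive (Derive f) t -> f t <> 0 ->
  is_derive (logd f) t (Derive_n f 2 t / f t - logd f t ^ 2).
Proof.
  intros Hd Hd2 Hf; unfold logd; auto_derive.
  - tauto.
  - change (fun x => f x) with f; change (fun x => Derive f x) with (Derive f).
    change (Derive_n f 2 t) with (Derive (Derive f) t). field; exact Hf.
Qed.

Lemma is_derive_ln_comp (f : R -> R) t :
  ex_derive f t -> 0 < f t -> is_derive (fun s => ln (f s)) t (logd f t).
Proof.
  intros Hd Hf; unfold logd; auto_derive.
  - split; [exact Hd|]. split; [exact Hf|exact I].
  - change (fun x => f x) with f. field; lra.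
Qed.

Definition conf_gamma (alpha : nat -> R) (k i j : nat) : R :=
  alpha i * kron j k + alpha j * kron i k - alpha k * kron i j.

Section ConfGammaContractions.

Variables (n : nat) (alpha : nat -> R).
Hypothesis alpha_unit : sumR n (fun k => alpha k ^ 2) = 1.

Lemma conf_gamma_trace_r k i : conf_gamma alpha k i k = alpha i.
Proof. unfold conf_gamma; rewrite kron_diag; ring. Qed.

Lemma conf_gamma_trace_l k l : conf_gamma alpha k k l = alpha l.
Proof. unfold conf_gamma; rewrite kron_diag, (kron_sym l k); ring. Qed.

Lemma sumR_conf_gamma_trace i :
  sumR n (fun k => conf_gamma alpha k i k) = INR n * alpha i.
Proof.
  rewrite <- sumR_const; apply sumR_ext; intros; apply conf_gamma_trace_r.
Qed.

Lemma sumR_alpha_conf_gamma i j : (i < n)%nat -> (j < n)%nat ->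
  sumR n (fun k => alpha k * conf_gamma alpha k i j) = 2 * alpha i * alpha j - kron i j.
Proof.
  intros Hi Hj.
  rewrite (sumR_ext n _ (fun k => kron j k * (alpha i * alpha k)
      + kron i k * (alpha j * alpha k) - kron i j * alpha k ^ 2))
    by (intros; unfold conf_gamma; ring).
  rewrite sumR_minus, sumR_plus, !sumR_kron, sumR_scal_l, alpha_unit by assumption.
  ring.
Qed.

Lemma sumR_alpha_conf_gamma_upper i j : (i < n)%nat -> (j < n)%nat ->
  sumR n (fun k => alpha k * conf_gamma alpha j i k) = kron i j.
Proof.
  intros Hi Hj.
  rewrite (sumR_ext n _ (fun k => kron j k * (alpha i * alpha k)
      + kron i j * alpha k ^ 2 - kron i k * (alpha j * alpha k)))
    by (intros; unfold conf_gamma; rewrite (kron_sym k j); ring).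
  rewrite sumR_minus, sumR_plus, !sumR_kron, sumR_scal_l, alpha_unit by assumption.
  ring.
Qed.

Lemma sumR_conf_gamma_trace_gamma i j : (i < n)%nat -> (j < n)%nat ->
  sumR n (fun k => sumR n (fun l => conf_gamma alpha k k l * conf_gamma alpha l i j))
  = INR n * (2 * alpha i * alpha j - kron i j).
Proof.
  intros Hi Hj; rewrite <- sumR_const; apply sumR_ext; intros k _.
  rewrite <- sumR_alpha_conf_gamma by assumption.
  apply sumR_ext; intros l _; rewrite conf_gamma_trace_l; reflexivity.
Qed.

Lemma sumR_conf_gamma_gamma i j : (i < n)%nat -> (j < n)%nat ->
  sumR n (fun k => sumR n (fun l => conf_gamma alpha k j l * conf_gamma alpha l i k))
  = (INR n + 2) * alpha i * alpha j - 2 * kron i j.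
Proof.
  intros Hi Hj.
  rewrite (sumR_ext n _ (fun k => alpha i * alpha j
      + kron j k * (2 * alpha i * alpha k - kron i k) - alpha k * conf_gamma alpha j i k)).
  - rewrite sumR_minus, sumR_plus, sumR_const, sumR_kron, sumR_alpha_conf_gamma_upper
      by assumption.
    ring.
  - intros k Hk.
    rewrite (sumR_ext n _ (fun l => alpha j * (kron k l * conf_gamma alpha l i k)
        + kron j k * (alpha l * conf_gamma alpha l i k)
        - alpha k * (kron j l * conf_gamma alpha l i k)))
      by (intros l _; unfold conf_gamma at 1; rewrite (kron_sym l k); ring).
    rewrite sumR_minus, sumR_plus, !sumR_scal_l, !sumR_kron, sumR_alpha_conf_gamma,
      conf_gamma_trace_r by assumption.
    ring.
Qed.

End ConfGammaContractions.

Lemma conf_metric_kron (Phi : (nat -> R) -> R) i j x :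
  conf_metric Phi i j x = kron i j * / Phi x ^ 2.
Proof. unfold conf_metric, kron; destruct (Nat.eqb i j); ring. Qed.

Lemma conf_metric_inv_kron (Phi : (nat -> R) -> R) i j x :
  conf_metric_inv Phi i j x = kron i j * Phi x ^ 2.
Proof. unfold conf_metric_inv, kron; destruct (Nat.eqb i j); ring. Qed.

Section ConformalPlaneWave.

Variables (n : nat) (alpha : nat -> R) (phi : R -> R).
Hypothesis alpha_unit : sumR n (fun k => alpha k ^ 2) = 1.
Hypothesis phi_derivable : forall t, ex_derive phi t.
Hypothesis phi'_derivable : forall t, ex_derive (Derive phi) t.
Hypothesis phi_neq0 : forall t, phi t <> 0.

Local Notation Phi := (fun y => phi (xi n alpha y)).
Local Notation g := (conf_metric Phi).
Local Notation gi := (conf_metric_inv Phi).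

Lemma pd_conf_metric i j l x : (i < n)%nat ->
  pd i (g j l) x
  = alpha i * (kron j l * (- 2 * logd phi (xi n alpha x) / phi (xi n alpha x) ^ 2)).
Proof.
  intros Hi.
  rewrite (pd_ext i _ (fun y => kron j l * / phi (xi n alpha y) ^ 2))
    by (intros y; apply conf_metric_kron).
  apply (pd_plane_wave n alpha i (fun s => kron j l * / phi s ^ 2)); [exact Hi|].
  apply (is_derive_scal (fun s => / phi s ^ 2)), is_derive_inv_sq; auto.
Qed.

Lemma christoffel_conf k i j x : (k < n)%nat -> (i < n)%nat -> (j < n)%nat ->
  christoffel n g gi k i j x = - conf_gamma alpha k i j * logd phi (xi n alpha x).
Proof.
  intros Hk Hi Hj; unfold christoffel.
  set (t := xi n alpha x); set (D := - 2 * logd phi t / phi t ^ 2).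
  rewrite (sumR_ext n _ (fun l => kron k l * (phi t ^ 2
      * (alpha i * (kron j l * D) + alpha j * (kron i l * D) - alpha l * (kron i j * D))))).
  - rewrite sumR_kron by exact Hk. unfold D, conf_gamma.
    rewrite (kron_sym j k), (kron_sym i k). field; apply phi_neq0.
  - intros l Hl; rewrite !pd_conf_metric by assumption.
    rewrite conf_metric_inv_kron; fold t D; ring.
Qed.

Lemma pd_christoffel_conf a k i j x :
  (a < n)%nat -> (k < n)%nat -> (i < n)%nat -> (j < n)%nat ->
  pd a (christoffel n g gi k i j) x
  = alpha a * (- conf_gamma alpha k i j
      * (Derive_n phi 2 (xi n alpha x) / phi (xi n alpha x) - logd phi (xi n alpha x) ^ 2)).
Proof.
  intros Ha Hk Hi Hj.
  rewrite (pd_ext a _ (fun y => - conf_gamma alpha k i j * logd phi (xi n alpha y)))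
    by (intros; apply christoffel_conf; assumption).
  apply (pd_plane_wave n alpha a (fun s => - conf_gamma alpha k i j * logd phi s)); [exact Ha|].
  apply (is_derive_scal (logd phi)), is_derive_logd; auto.
Qed.

Lemma ricci_conf i j x : (i < n)%nat -> (j < n)%nat ->
  ricci n g gi i j x
  = (INR n - 2) * (Derive_n phi 2 (xi n alpha x) / phi (xi n alpha x)) * (alpha i * alpha j)
    + (Derive_n phi 2 (xi n alpha x) / phi (xi n alpha x)
       - (INR n - 1) * logd phi (xi n alpha x) ^ 2) * kron i j.
Proof.
  intros Hi Hj; unfold ricci; cbv zeta.
  set (t := xi n alpha x); set (q := logd phi t); set (q' := Derive_n phi 2 t / phi t - q ^ 2).
  rewrite (sumR_ext n _ (fun k => - q' * (alpha k * conf_gamma alpha k i j)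
      + (q' * alpha j) * conf_gamma alpha k i k
      + q ^ 2 * (sumR n (fun l => conf_gamma alpha k k l * conf_gamma alpha l i j)
                 - sumR n (fun l => conf_gamma alpha k j l * conf_gamma alpha l i k)))).
  - rewrite !sumR_plus, !sumR_scal_l, sumR_minus, sumR_alpha_conf_gamma,
      sumR_conf_gamma_trace, sumR_conf_gamma_trace_gamma, sumR_conf_gamma_gamma
      by assumption.
    unfold q'; ring.
  - intros k Hk; rewrite !pd_christoffel_conf by assumption. fold t q q'.
    rewrite (sumR_ext n _ (fun l => q ^ 2 * (conf_gamma alpha k k l * conf_gamma alpha l i j)
        - q ^ 2 * (conf_gamma alpha k j l * conf_gamma alpha l i k)))
      by (intros l Hl; rewrite !christoffel_conf by assumption; fold t q; ring).
    rewrite sumR_minus, !sumR_scal_l; ring.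
Qed.

Lemma hessian_conf (h h' : R -> R) h'' i j x : (i < n)%nat -> (j < n)%nat ->
  (forall s, is_derive h s (h' s)) -> is_derive h' (xi n alpha x) h'' ->
  hessian n g gi (fun y => h (xi n alpha y)) i j x
  = (h'' + 2 * logd phi (xi n alpha x) * h' (xi n alpha x)) * (alpha i * alpha j)
    - logd phi (xi n alpha x) * h' (xi n alpha x) * kron i j.
Proof.
  intros Hi Hj Hh Hh'; unfold hessian; set (t := xi n alpha x).
  rewrite (pd_ext i _ (fun y => alpha j * h' (xi n alpha y)))
    by (intros; apply pd_plane_wave; auto).
  rewrite (pd_plane_wave n alpha i (fun s => alpha j * h' s) x (alpha j * h''))
    by (auto using is_derive_scal).
  rewrite (sumR_ext n _ (fun k => - logd phi t * h' t * (alpha k * conf_gamma alpha k i j)))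
    by (intros k Hk; rewrite christoffel_conf, (pd_plane_wave n alpha k h x (h' t)) by auto;
        fold t; ring).
  rewrite sumR_scal_l, sumR_alpha_conf_gamma by assumption.
  ring.
Qed.

End ConformalPlaneWave.

Definition qe_coef_aa (n : nat) (phi u : R -> R) (m t : R) : R :=
  (INR n - 2) * (Derive_n phi 2 t / phi t)
  - m / u t * (Derive_n u 2 t + 2 * (Derive phi t / phi t) * Derive u t).

Definition qe_coef_kron (n : nat) (phi u : R -> R) (m lambda t : R) : R :=
  Derive_n phi 2 t / phi t - (INR n - 1) * (Derive phi t ^ 2 / phi t ^ 2)
  + m * (Derive phi t / phi t) * (Derive u t / u t) - lambda / phi t ^ 2.

Lemma quasi_einstein_defect_plane_wave n alpha (phi u : R -> R) m lambda x i j :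
  sumR n (fun k => alpha k ^ 2) = 1 ->
  (forall t, ex_derive phi t) -> (forall t, ex_derive (Derive phi) t) ->
  (forall t, phi t <> 0) ->
  (forall t, ex_derive u t) -> (forall t, ex_derive (Derive u) t) ->
  (forall t, 0 < u t) -> m <> 0 ->
  (i < n)%nat -> (j < n)%nat ->
  let Phi := fun y => phi (xi n alpha y) in
  let f := fun y => - m * ln (u (xi n alpha y)) in
  let t := xi n alpha x in
  ricci n (conf_metric Phi) (conf_metric_inv Phi) i j x
  + hessian n (conf_metric Phi) (conf_metric_inv Phi) f i j x
  - / m * pd i f x * pd j f x - lambda * conf_metric Phi i j x
  = alpha i * alpha j * qe_coef_aa n phi u m t + kron i j * qe_coef_kron n phi u m lambda t.
Proof.
  intros Hunit Hphi Hphi' Hphi0 Hu Hu' Hu0 Hm Hi Hj Phi f t.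
  assert (Hf' : forall s, is_derive (fun s => - m * ln (u s)) s (- m * logd u s)).
  { intros s; apply (is_derive_scal (fun s => ln (u s))), is_derive_ln_comp; auto. }
  assert (Hf'' : is_derive (fun s => - m * logd u s) t
                   (- m * (Derive_n u 2 t / u t - logd u t ^ 2))).
  { apply (is_derive_scal (logd u)), is_derive_logd;
      [apply Hu | apply Hu' | apply Rgt_not_eq, Hu0]. }
  unfold Phi, f.
  rewrite ricci_conf, (hessian_conf n alpha phi Hunit Hphi Hphi0
    (fun s => - m * ln (u s)) (fun s => - m * logd u s) _ i j x Hi Hj Hf' Hf'')
    by assumption.
  rewrite !(pd_plane_wave n alpha _ (fun s => - m * ln (u s)) x (- m * logd u t)) by auto.
  rewrite conf_metric_kron. fold t.
  unfold qe_coef_aa, qe_coef_kron, logd.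
  specialize (Hphi0 t); specialize (Hu0 t).
  field; split; [|split]; auto; lra.
Qed.

Lemma sumR_neq0 n (F : nat -> R) :
  sumR n F <> 0 -> exists i, (i < n)%nat /\ F i <> 0.
Proof.
  induction n as [|n IH]; simpl; intros H; [lra|].
  destruct (Req_dec (F n) 0) as [E|E].
  - rewrite E, Rplus_0_r in H. destruct (IH H) as [i [Hi Fi]]. exists i; split; [lia|exact Fi].
  - exists n; split; [lia|exact E].
Qed.

Lemma rank_one_plus_scalar_eq0 n (alpha : nat -> R) A B :
  (2 <= n)%nat -> sumR n (fun k => alpha k ^ 2) <> 0 ->
  (forall i j, (i < n)%nat -> (j < n)%nat -> alpha i * alpha j * A + kron i j * B = 0) ->
  A = 0 /\ B = 0.
Proof.
  intros Hn Halpha H.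
  destruct (sumR_neq0 n _ Halpha) as [i [Hi Hai]].
  assert (Hai' : alpha i <> 0) by (intros E; apply Hai; rewrite E; ring).
  set (k := if Nat.eqb i 0 then 1%nat else 0%nat).
  assert (Hk : (k < n)%nat) by (unfold k; destruct (Nat.eqb i 0); lia).
  assert (Hik : kron i k = 0)
    by (apply kron_neq; unfold k; destruct (Nat.eqb_spec i 0); lia).
  assert (HkA : alpha k * A = 0).
  { apply (Rmult_eq_reg_l (alpha i)); [|exact Hai'].
    rewrite Rmult_0_r, <- (H i k Hi Hk), Hik. ring. }
  assert (HB : B = 0).
  { rewrite <- (H k k Hk Hk), kron_diag. rewrite Rmult_assoc, HkA. ring. }
  split; [|exact HB].
  apply (Rmult_eq_reg_l (alpha i * alpha i)); [|now apply Rmult_integral_contrapositive].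
  rewrite Rmult_0_r, <- (H i i Hi Hi), HB. ring.
Qed.

Theorem proposition2p2 (n : nat) (alpha : nat -> R) (phi u : R -> R) (m lambda : R) :
  (3 <= n)%nat ->
  sumR n (fun i => alpha i ^ 2) = 1 ->
  (forall (k : nat) (t : R), ex_derive_n phi k t) ->
  (forall (k : nat) (t : R), ex_derive_n u k t) ->
  (forall t, phi t <> 0) ->
  (forall t, 0 < u t) ->
  m <> 0 ->
  lambda <= 0 ->
  let Phi := fun x => phi (xi n alpha x) in
  let f := fun x => - m * ln (u (xi n alpha x)) in
  (exists x y : nat -> R, f x <> f y) ->
  (quasi_einstein n (conf_metric Phi) (conf_metric_inv Phi) f m lambda <->
   forall t : R,
     (INR n - 2) * (Derive_n phi 2 t / phi t)
       - m / u t * (Derive_n u 2 t + 2 * (Derive phi t / phi t) * Derive u t) = 0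
     /\
     Derive_n phi 2 t / phi t - (INR n - 1) * (Derive phi t ^ 2 / phi t ^ 2)
       + m * (Derive phi t / phi t) * (Derive u t / u t) = lambda / phi t ^ 2).
Proof.
  intros Hn Hunit Hphi Hu Hphi0 Hu0 Hm _ Phi f _.
  pose proof (fun x i j => quasi_einstein_defect_plane_wave n alpha phi u m lambda x i j Hunit
    (Hphi 1%nat) (Hphi 2%nat) Hphi0 (Hu 1%nat) (Hu 2%nat) Hu0 Hm) as Hdefect.
  cbv zeta in Hdefect. unfold quasi_einstein, Phi, f.
  split.
  - intros HQ t.
    assert (Ht : xi n alpha (fun k => t * alpha k) = t) by (rewrite xi_scale, Hunit; ring).
    destruct (rank_one_plus_scalar_eq0 n alpha (qe_coef_aa n phi u m t)
      (qe_coef_kron n phi u m lambda t)) as [HA HB]; [lia | lra | |].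
    + intros i j Hi Hj.
      rewrite <- Ht, <- Hdefect, HQ by assumption. ring.
    + unfold qe_coef_aa, qe_coef_kron in HA, HB. split; lra.
  - intros Hode x i j Hi Hj.
    destruct (Hode (xi n alpha x)) as [HA HB].
    apply Rminus_diag_uniq; rewrite Hdefect by assumption.
    unfold qe_coef_aa, qe_coef_kron. rewrite HA, HB. ring.
Qed.
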